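(* Let $k$ be a field, let $V_\bullet$ be a complex of finite dimensional $k$-vector spaces, indexed cohomologically (differential $d_i:V_i\to V_{i+1}$, $i\in\mathbb{Z}$), and let $\phi_\bullet:V_\bullet\to V_\bullet$ be a chain map. For each $i$ let $\phi_i^H:H^i(V_\bullet)\to H^i(V_\bullet)$ be the induced map on cohomology. Then the following are equivalent: (a) $\phi_\bullet$ is chain homotopic to a commutator in the endomorphism ring of the complex $V_\bullet$ (i.e. to a chain map of the form $\alpha_\bullet\beta_\bullet-\beta_\bullet\alpha_\bullet$ with $\alpha_\bullet,\beta_\bullet$ chain endomorphisms of $V_\bullet$); (b) $\operatorname{tr}(\phi_i^H)=0$ for every index $i\in\mathbb{Z}$.
   Context: $\operatorname{tr}$ denotes the trace of an endomorphism of a finite dimensional vector space. $H^i(V_\bullet)=\ker d_i/\operatorname{im} d_{i-1}$. *)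

From HB Require Import structures.
From mathcomp Require Import all_boot all_order all_algebra.
Set Implicit Arguments. Unset Strict Implicit. Unset Printing Implicit Defensive.
Import Order.TTheory GRing.Theory Num.Theory.
Local Open Scope ring_scope.

(* A cohomologically indexed complex of finite dimensional
   k-vector spaces is given by dimensions [n : int -> nat] (V_i = k^(n i),
   row vectors) and differentials [d i : 'M_(n i, n (i+1))], acting on row
   vectors: d_i(v) = v *m d i.  Composition "f then g" is f *m g. *)

Section Complexes.
Variables (k : fieldType) (n : int -> nat).

Definition is_complex (d : forall i : int, 'M[k]_(n i, n (i + 1))) : Prop :=
  forall i : int, d i *m d (i + 1) = 0.

Definition eq_prev (i : int) : n (i - 1 + 1) = n i := congr1 n (subrK 1 i).

Definition dprev (d : forall i : int, 'M[k]_(n i, n (i + 1))) (i : int)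
  : 'M[k]_(n (i - 1), n i) := castmx (erefl, eq_prev i) (d (i - 1)).

Definition is_chain_map (d : forall i : int, 'M[k]_(n i, n (i + 1)))
  (phi : forall i : int, 'M[k]_(n i)) : Prop :=
  forall i : int, d i *m phi (i + 1) = phi i *m d i.

Definition chain_homotopic (d : forall i : int, 'M[k]_(n i, n (i + 1)))
  (phi psi : forall i : int, 'M[k]_(n i)) : Prop :=
  exists h : forall i : int, 'M[k]_(n (i + 1), n i),
    forall i : int,
      phi i - psi i
      = d i *m h i + castmx (eq_prev i, eq_prev i) (h (i - 1) *m d (i - 1)).

(* As a concrete model of the
   quotient we take the complement W = (ker d_i :\: im d_{i-1}) of the
   image inside the kernel; the rows of [cohom_basis] are a basis of W,
   whose classes form a basis of H^i. *)
Definition cycles (d : forall i : int, 'M[k]_(n i, n (i + 1))) (i : int)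
  : 'M[k]_(n i) := kermx (d i).

Definition cohom_basis (d : forall i : int, 'M[k]_(n i, n (i + 1))) (i : int) :=
  row_base (cycles d i :\: dprev d i)%MS.

(* Matrix of the induced map phi^H_i : H^i -> H^i in the basis of classes of
   the rows w_j of [cohom_basis]: write phi_i(w_j) = sum_l a_jl w_l + b_j
   with b_j in im d_{i-1}; the matrix is (a_jl). *)
Definition cohom_map (d : forall i : int, 'M[k]_(n i, n (i + 1)))
  (phi : forall i : int, 'M[k]_(n i)) (i : int) :=
  let B := cohom_basis d i in
  let C := row_base (dprev d i) in
  lsubmx ((B *m phi i) *m pinvmx (col_mx B C)).

End Complexes.

From HB Require Import structures.
From mathcomp Require Import all_boot all_order all_algebra.
Set Implicit Arguments. Unset Strict Implicit. Unset Printing Implicit Defensive.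
Import Order.TTheory GRing.Theory Num.Theory.
Local Open Scope ring_scope.

(* Shoda's theorem holds over every field: a trace-zero matrix is conjugate to a
   Hessenberg matrix B.  If Y is upper bidiagonal with ones on the superdiagonal, then
   e_0 is a cyclic vector of Y, so everything commuting with Y is a polynomial in Y,
   and B lies in the image of X |-> XY - YX as soon as tr (B Y^j) = 0 for all j.  For
   Hessenberg B, tr (B Y^j) only sees the diagonal and superdiagonal of Y^j.  For the
   nilpotent Jordan block this leaves only the subdiagonal sum of B.  If that sum is
   nonzero, take the diagonal 0, 1, 0, 1, ... instead: then every Y^(j+1) has the
   diagonal and superdiagonal of Y, and an elementary conjugation at a nonzero
   subdiagonal entry of B makes tr (B Y) vanish.

   Taking cohomology is multiplicative on chain maps and kills null-homotopic maps, so
   (a) makes each phi^H_i a commutator, of trace zero.  Conversely, commutators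
   [X_i, Y_i] = phi^H_i lift, through a splitting of H^i into V_i, to chain maps alpha,
   beta such that phi - [beta, alpha] is zero on cohomology; over a field such a chain
   map is null-homotopic. *)

Definition is_commutator (R : pzRingType) m (A : 'M[R]_m) :=
  exists X Y : 'M[R]_m, A = X *m Y - Y *m X.

(** * Shoda's theorem *)

Section TraceDuality.
Variables (k : fieldType) (m : nat).
Implicit Types (A B X Y Z : 'M[k]_m).

Lemma mxtrace_delta_mul (i j : 'I_m) A : \tr (delta_mx i j *m A) = A j i.
Proof.
rewrite -(mul_delta_mx (0 : 'I_1)) -mulmxA mxtrace_mulC -rowE -colE.
by rewrite trace_mx11 !mxE.
Qed.

Lemma mxtrace_mxvec X Z : \tr (X *m Z) = (mxvec X *m (mxvec Z^T)^T) 0 0.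
Proof.
rewrite [RHS]mxE (reindex _ (curry_mxvec_bij _ _)) /=.
under [LHS]eq_bigr do rewrite mxE.
by rewrite pair_big; apply: eq_bigr => -[i j] _; rewrite /= mxE !mxvecE mxE.
Qed.

Lemma commutator_of_cent_orth Y B :
  (forall Z, Y *m Z = Z *m Y -> \tr (B *m Z) = 0) -> exists X, B = X *m Y - Y *m X.
Proof.
move=> orthB; pose L := lin_mx (mulmxr Y) - lin_mx (mulmx Y).
have mulL X : mxvec X *m L = mxvec (X *m Y - Y *m X).
  by rewrite mulmxBr !mul_vec_lin /= linearB.
suff /submxP[w defB] : (mxvec B <= L)%MS.
  by exists (vec_mx w); apply: (can_inj mxvecK); rewrite defB -mulL vec_mxK.
rewrite submxE; apply/eqP/rowP => j; rewrite [RHS]mxE.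
pose v := col j (cokermx L); pose Z := (vec_mx v^T)^T.
have defv : v = (mxvec Z^T)^T by rewrite trmxK vec_mxK trmxK.
have Lv : L *m v = 0 by rewrite /v colE mulmxA mulmx_coker mul0mx.
have cYZ : Y *m Z = Z *m Y.
  apply/eqP; rewrite -subr_eq0; apply/eqP/matrixP => a b; rewrite [RHS]mxE.
  rewrite -mxtrace_delta_mul mulmxBr raddfB /= !mulmxA.
  rewrite [in X in _ - X]mxtrace_mulC [in X in _ - X]mulmxA -raddfB /= -mulmxBl.
  rewrite mxtrace_mxvec -defv -mulL.
  by rewrite -mulmxA Lv mulmx0 mxE.
have := orthB Z cYZ; rewrite mxtrace_mxvec -defv /v => <-.
by rewrite colE mulmxA -colE [RHS]mxE.
Qed.

End TraceDuality.

Section CyclicCentralizer.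
Variables (k : fieldType) (m : nat).
Implicit Types (Y Z : 'M[k]_m) (u : 'rV[k]_m).

Definition krylov_mx u Y : 'M[k]_m := \matrix_(j < m) (u *m Y ^+ j).

Lemma cent_krylov_unit u Y Z : krylov_mx u Y \in unitmx -> Y *m Z = Z *m Y ->
  exists w : 'rV[k]_m, Z = \sum_(j < m) w 0 j *: Y ^+ j.
Proof.
move=> uK cYZ; pose w := u *m Z *m invmx (krylov_mx u Y); exists w.
pose Zw := \sum_(j < m) w 0 j *: Y ^+ j.
have cYZw : Y *m Zw = Zw *m Y.
  rewrite mulmx_sumr mulmx_suml; apply: eq_bigr => j _.
  by rewrite -scalemxAr -scalemxAl !mulmxE -exprS -exprSr.
have uZw : u *m Zw = u *m Z.
  rewrite mulmx_sumr -[RHS](mulmxKV uK) [w *m _]mulmx_sum_row.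
  by apply: eq_bigr => j _; rewrite rowK scalemxAr.
have cW : GRing.comm Y (Z - Zw).
  by rewrite /GRing.comm -!mulmxE mulmxBr mulmxBl cYZ cYZw.
have KW : krylov_mx u Y *m (Z - Zw) = 0.
  apply/row_matrixP => j; rewrite row_mul rowK row0 -mulmxA mulmxE.
  by rewrite -(commrX j (commr_sym cW)) -mulmxE mulmxA mulmxBr uZw subrr mul0mx.
by apply/eqP; rewrite -subr_eq0 -(mulKmx uK (Z - Zw)) KW mulmx0.
Qed.

End CyclicCentralizer.

Section Bidiagonal.
Variables (k : fieldType) (m : nat) (dd : 'I_m -> k).

Definition bidiag_mx : 'M[k]_m :=
  \matrix_(i, j) ((i == j)%:R * dd i + (i.+1 == j)%:R).
Local Notation Y := bidiag_mx.

Lemma mulmx_bidiagE (A : 'M[k]_m) a b :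
  (A *m Y) a b = A a b * dd b + \sum_(c : 'I_m | c.+1 == b) A a c.
Proof.
rewrite mxE; under eq_bigr do rewrite mxE mulrDr.
rewrite big_split /= (bigD1 b) //= big1 => [|c /negPf->]; last first.
  by rewrite mul0r mulr0.
rewrite eqxx mul1r addr0 [in RHS]big_mkcond /=; congr (_ + _).
by apply: eq_bigr => c _; case: (c.+1 == b); rewrite ?mulr1 ?mulr0.
Qed.

Lemma bidiag_mulmxE (A : 'M[k]_m) a b :
  (Y *m A) a b = dd a * A a b + \sum_(c : 'I_m | a.+1 == c) A c b.
Proof.
rewrite mxE; under eq_bigr do rewrite mxE mulrDl.
rewrite big_split /= (bigD1 a) //= big1 => [|c]; last first.
  by rewrite eq_sym => /negPf->; rewrite !mul0r.
rewrite eqxx mul1r addr0 [in RHS]big_mkcond /=; congr (_ + _).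
by apply: eq_bigr => c _; case: (a.+1 == c); rewrite ?mul1r ?mul0r.
Qed.

Lemma sum_succ_eq (F : 'I_m -> k) (a b : 'I_m) : b = a.+1 :> nat ->
  \sum_(c : 'I_m | c.+1 == b) F c = F a.
Proof. by move=> defb; rewrite (big_pred1 a) // => c; rewrite /= defb eqSS. Qed.

Lemma bidiag_expr_lower j (a b : 'I_m) : (b < a)%N -> (Y ^+ j) a b = 0.
Proof.
elim: j b => [|j IHj] b ltba; first by rewrite expr0 mxE -val_eqE /= (gtn_eqF ltba).
rewrite exprSr -mulmxE mulmx_bidiagE IHj // mul0r add0r big1 // => c /eqP defb.
by apply: IHj; rewrite (ltn_trans _ ltba) // -defb.
Qed.

Lemma bidiag_expr_diag j (a : 'I_m) : (Y ^+ j) a a = dd a ^+ j.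
Proof.
elim: j => [|j IHj]; first by rewrite expr0 mxE eqxx.
rewrite exprSr -mulmxE mulmx_bidiagE IHj -exprSr big1 ?addr0 // => c /eqP defa.
by apply: bidiag_expr_lower; rewrite -defa.
Qed.

Lemma bidiag_expr_super j (a b : 'I_m) : b = a.+1 :> nat ->
  (Y ^+ j.+1) a b = (Y ^+ j) a b * dd b + dd a ^+ j.
Proof.
by move=> defb; rewrite exprSr -mulmxE mulmx_bidiagE (sum_succ_eq _ defb) bidiag_expr_diag.
Qed.

Lemma bidiag_expr_far j (a b : 'I_m) : (a + j < b)%N -> (Y ^+ j) a b = 0.
Proof.
elim: j b => [|j IHj] b ltab.
  by rewrite addn0 in ltab; rewrite expr0 mxE -val_eqE /= (ltn_eqF ltab).
rewrite exprSr -mulmxE mulmx_bidiagE IHj ?mul0r ?add0r; last first.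
  by rewrite (ltn_trans _ ltab) ?addnS.
by rewrite big1 // => c /eqP defb; apply: IHj; rewrite -ltnS defb -addnS.
Qed.

Lemma bidiag_expr_edge j (a b : 'I_m) : b = (a + j)%N :> nat -> (Y ^+ j) a b = 1.
Proof.
elim: j b => [|j IHj] b defb.
  by rewrite expr0 mxE -val_eqE /= defb addn0 eqxx.
have ltajm : (a + j < m)%N by rewrite (leq_ltn_trans _ (ltn_ord b)) // defb addnS.
rewrite exprSr -mulmxE mulmx_bidiagE bidiag_expr_far ?mul0r ?add0r; last first.
  by rewrite defb addnS.
by rewrite (sum_succ_eq _ (a := Ordinal ltajm)) ?IHj // defb addnS.
Qed.

End Bidiagonal.

Section KrylovBidiagonal.
Variables (k : fieldType) (m : nat).

Lemma krylov_bidiag_unit (dd : 'I_m.+1 -> k) :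
  krylov_mx (delta_mx 0 0) (bidiag_mx dd) \in unitmx.
Proof.
rewrite unitmxE det_trig.
  by rewrite big1 ?unitr1 // => j _; rewrite mxE -rowE mxE bidiag_expr_edge.
by apply/is_trig_mxP => j b ltjb; rewrite mxE -rowE mxE bidiag_expr_far.
Qed.

Lemma commutator_of_bidiag_orth (dd : 'I_m.+1 -> k) (B : 'M[k]_m.+1) :
  (forall j, \tr (B *m bidiag_mx dd ^+ j) = 0) -> is_commutator B.
Proof.
move=> orthB; have [X defB] : exists X, B = X *m bidiag_mx dd - bidiag_mx dd *m X.
  apply: commutator_of_cent_orth => Z.
  move=> /(cent_krylov_unit (krylov_bidiag_unit dd))[w ->].
  rewrite mulmx_sumr linear_sum big1 //= => j _.
  by rewrite -scalemxAr mxtraceZ orthB mulr0.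
by exists X, (bidiag_mx dd).
Qed.

End KrylovBidiagonal.

Section Hessenberg.
Variable k : fieldType.

Definition is_hessenberg m (B : 'M[k]_m) :=
  forall a b : 'I_m, (b.+1 < a)%N -> B a b = 0.

Lemma invmx_block_diag m1 m2 (A : 'M[k]_m1) (B : 'M[k]_m2) :
  A \in unitmx -> B \in unitmx ->
  invmx (block_mx A 0 0 B) = block_mx (invmx A) 0 0 (invmx B).
Proof.
move=> uA uB; have uAB : block_mx A 0 0 B \in unitmx.
  by rewrite unitmxE det_ublock unitrM -!unitmxE uA uB.
rewrite -[RHS](mulKmx uAB) mulmx_block !mulmxV // !mulmx0 !mul0mx !addr0 !add0r.
by rewrite -scalar_mx_block mulmx1.
Qed.

Lemma hessenberg_block m (a : 'M[k]_1) (r : 'rV[k]_m) (c : 'cV[k]_m) (M : 'M[k]_m) :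
  (forall i : 'I_m, (0 < i)%N -> c i 0 = 0) -> is_hessenberg M ->
  is_hessenberg (block_mx a r c M : 'M_(1 + m)).
Proof.
move=> c0 hM i j.
case: (splitP i) => [i' ei | i' ei]; first by rewrite ei (ord1 i').
have -> : i = rshift 1 i' by apply: val_inj.
case: (splitP j) => [j' ej | j' ej].
  have -> : j = lshift m j' by apply: val_inj.
  by rewrite block_mxEdl (ord1 j') /= add1n ltnS; apply: c0.
have -> : j = rshift 1 j' by apply: val_inj.
by rewrite block_mxEdr /= !add1n ltnS; apply: hM.
Qed.

Lemma col_ebase_reduce m (c : 'cV[k]_m) (a : 'I_m) :
  (0 < a)%N -> (invmx (col_ebase c) *m c) a 0 = 0.
Proof.
move=> a_gt0; rewrite -[c in _ *m c]mulmx_ebase !mulmxA mulVmx ?col_ebase_unit //.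
rewrite mul1mx mxE big1 // => b _; rewrite mxE (ord1 b).
by rewrite eqn0Ngt a_gt0 mul0r.
Qed.

(* The column [c] is reduced along with [A]: in the induction step it is the part of
   the first column below the diagonal. *)
Lemma hessenberg_reduction m (A : 'M[k]_m) (c : 'cV[k]_m) :
  exists2 P, P \in unitmx &
    is_hessenberg (conjmx P A) /\ forall a : 'I_m, (0 < a)%N -> (P *m c) a 0 = 0.
Proof.
elim: m A c => [|m IHm] A c.
  by exists 1%:M; [exact: unitmx1 | split=> -[]].
pose S := invmx (col_ebase c).
have uS : S \in unitmx by rewrite unitmx_inv col_ebase_unit.
pose A0 : 'M_(1 + m) := conjmx S A.
have [R uR [hR Rc]] := IHm (drsubmx A0) (dlsubmx A0).
pose D : 'M_(1 + m) := block_mx 1%:M 0 0 R.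
have uD : D \in unitmx by rewrite unitmxE det_ublock det1 mul1r -unitmxE.
exists (D *m S); first by rewrite unitmx_mul uD.
split.
  have invD : invmx D = block_mx 1%:M 0 0 (invmx R).
    by rewrite invmx_block_diag ?unitmx1 ?invmx1.
  rewrite conjuMumx // -/A0 conjumx //.
  change (@is_hessenberg (1 + m) (D *m A0 *m invmx D)).
  rewrite invD /D -[A0]submxK !mulmx_block !mulmx0 !mul0mx !addr0 !add0r.
  rewrite !mulmx1 !mul1mx.
  by apply: hessenberg_block; rewrite -?conjumx.
pose Sc : 'cV_(1 + m) := S *m c.
have Sc0 : Sc = col_mx (usubmx Sc) 0.
  rewrite -{1}[Sc]vsubmxK; congr col_mx; apply/matrixP => i j.
  by rewrite (ord1 j) [RHS]mxE mxE col_ebase_reduce.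
move=> a a_gt0; rewrite -mulmxA; change ((D *m Sc) a 0 = 0).
rewrite Sc0 mul_block_col !mulmx0 !mul0mx !addr0 mul1mx.
case: (@splitP 1 m a) => [a' ea | a' ea]; first by move: a_gt0; rewrite ea (ord1 a').
have -> : a = rshift 1 a' by apply: val_inj.
by rewrite col_mxEd mxE.
Qed.

Lemma hessenbergD m (A B : 'M[k]_m) :
  is_hessenberg A -> is_hessenberg B -> is_hessenberg (A + B).
Proof. by move=> hA hB a b ltba; rewrite mxE hA ?hB ?addr0. Qed.

Lemma hessenbergN m (A : 'M[k]_m) : is_hessenberg A -> is_hessenberg (- A).
Proof. by move=> hA a b ltba; rewrite mxE hA ?oppr0. Qed.

Lemma hessenbergZ m x (A : 'M[k]_m) : is_hessenberg A -> is_hessenberg (x *: A).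
Proof. by move=> hA a b ltba; rewrite mxE hA ?mulr0. Qed.

Lemma delta_mulmxE m n (i j : 'I_m) (A : 'M[k]_(m, n)) r s :
  (delta_mx i j *m A) r s = (r == i)%:R * A j s.
Proof.
rewrite mxE (bigD1 j) //= big1 => [|c /negPf ncj]; last first.
  by rewrite mxE ncj andbF mul0r.
by rewrite mxE eqxx andbT addr0.
Qed.

Lemma mulmx_deltaE m n (i j : 'I_n) (A : 'M[k]_(m, n)) r s :
  (A *m delta_mx i j) r s = A r i * (s == j)%:R.
Proof.
rewrite mxE (bigD1 i) //= big1 => [|c /negPf nci]; last by rewrite mxE nci mulr0.
by rewrite mxE eqxx addr0.
Qed.

Lemma hessenberg_delta_mull m (i j : 'I_m) (A : 'M[k]_m) :
  (i <= j)%N -> is_hessenberg A -> is_hessenberg (delta_mx i j *m A).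
Proof.
move=> leij hA r s ltsr; rewrite delta_mulmxE.
have [eri | _] := eqP; last by rewrite mul0r.
by rewrite hA ?mulr0 // (leq_trans ltsr) ?eri.
Qed.

Lemma hessenberg_delta_mulr m (i j : 'I_m) (A : 'M[k]_m) :
  (i <= j)%N -> is_hessenberg A -> is_hessenberg (A *m delta_mx i j).
Proof.
move=> leij hA r s ltsr; rewrite mulmx_deltaE.
have [esj | _] := eqP; last by rewrite mulr0.
by rewrite hA ?mul0r // (leq_ltn_trans _ ltsr) // esj.
Qed.

Lemma mxtrace_hessenberg_mul m (B C : 'M[k]_m) : is_hessenberg B ->
  (forall a b : 'I_m, (b < a)%N -> C a b = 0) ->
  \tr (B *m C) = \sum_a (B a a * C a a + \sum_(b : 'I_m | b.+1 == a) B a b * C b a).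
Proof.
move=> hB hC; apply: eq_bigr => a _; rewrite mxE (bigD1 a) //=; congr (_ + _).
rewrite (bigID (fun b : 'I_m => b.+1 == a)) /= [X in _ + X]big1 ?addr0.
  apply: eq_bigl => b; have [-> | //] := eqVneq b a.
  by rewrite eqn_leq ltnn.
move=> b /andP[nba nsba]; case: (ltngtP a b) => [ltab | ltba | eab].
- by rewrite hC ?mulr0.
- by rewrite hB ?mul0r // ltn_neqAle nsba.
- by rewrite (val_inj eab) eqxx in nba.
Qed.

End Hessenberg.

Section Shoda.
Variable k : fieldType.

Lemma mxtrace_conjmx m (P A : 'M[k]_m) : P \in unitmx -> \tr (conjmx P A) = \tr A.
Proof. by move=> uP; rewrite conjumx // mxtrace_mulC mulmxA mulVmx ?mul1mx. Qed.

Lemma is_commutator_conjmx m (P A : 'M[k]_m) :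
  P \in unitmx -> is_commutator (conjmx P A) -> is_commutator A.
Proof.
move=> uP [X [Y eA]]; exists (conjmx (invmx P) X), (conjmx (invmx P) Y).
have sPV f : f \in [pred f | stablemx (invmx P) f].
  by rewrite inE stablemx_unit ?unitmx_inv.
by rewrite -(conjmxK A uP) eA -!conjmxM // /conjmx mulmxBr mulmxBl.
Qed.

Lemma mulmx_sqr0 m t (D : 'M[k]_m) :
  D *m D = 0 -> (1%:M + t *: D) *m (1%:M - t *: D) = 1%:M.
Proof.
move=> DD; rewrite mulmxBr !mulmxDl !mulmx1 !mul1mx -!scalemxAr -!scalemxAl.
by rewrite scalerA DD scaler0 addr0 addrK.
Qed.

Lemma unitmx_sqr0 m t (D : 'M[k]_m) : D *m D = 0 -> 1%:M + t *: D \in unitmx.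
Proof. by move/(mulmx_sqr0 t)/mulmx1_unit => []. Qed.

Lemma conjmx_sqr0 m t (B D : 'M[k]_m) : D *m D = 0 ->
  conjmx (1%:M + t *: D) B =
    B + t *: (D *m B) - (t *: (B *m D) + (t * t) *: (D *m B *m D)).
Proof.
move=> DD; have invT : invmx (1%:M + t *: D) = 1%:M - t *: D.
  by rewrite -[RHS](mulKmx (unitmx_sqr0 t DD)) mulmx_sqr0 ?mulmx1.
rewrite conjumx ?unitmx_sqr0 // invT mulmxDl mul1mx mulmxBr mulmx1 mulmxDl.
by rewrite -!scalemxAr -!scalemxAl !scalerA.
Qed.

(* Conjugation by 1 + t D with D := delta_mx b0 a0, so D^2 = 0, keeps B Hessenberg and
   shifts tr (B *m bidiag_mx dd) by t * B a0 b0 * (dd b0 - dd a0). *)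
Lemma hessenberg_shift m (dd : 'I_m -> k) (B : 'M[k]_m) (a0 b0 : 'I_m) :
  is_hessenberg B -> a0 = b0.+1 :> nat -> B a0 b0 * (dd b0 - dd a0) != 0 ->
  exists2 T, T \in unitmx &
    is_hessenberg (conjmx T B) /\ \tr (conjmx T B *m bidiag_mx dd) = 0.
Proof.
move=> hB ea0 nz; pose Y := bidiag_mx dd; pose D : 'M[k]_m := delta_mx b0 a0.
have neab : (a0 == b0) = false by rewrite -val_eqE /= ea0 (gtn_eqF (ltnSn b0)).
have DD : D *m D = 0 by rewrite mul_delta_mx_0 // neab.
pose c := B a0 b0 * (dd b0 - dd a0); pose t := - \tr (B *m Y) / c.
have conjTB := conjmx_sqr0 t B DD.
exists (1%:M + t *: D); first exact: unitmx_sqr0.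
split.
  have leba : (b0 <= a0)%N by rewrite ea0.
  have hDB := hessenberg_delta_mull leba hB.
  have hBD := hessenberg_delta_mulr leba hB.
  have hDBD := hessenberg_delta_mulr leba hDB.
  rewrite conjTB; apply: hessenbergD (hessenbergD hB (hessenbergZ _ hDB)) _.
  exact/hessenbergN/hessenbergD/hessenbergZ/hDBD/hessenbergZ.
have trDBY : \tr (D *m B *m Y) = B a0 b0 * dd b0.
  rewrite -mulmxA mxtrace_delta_mul mulmx_bidiagE big1 ?addr0 // => i /eqP eib.
  by apply: hB; rewrite ea0 -eib.
have trBDY : \tr (B *m D *m Y) = dd a0 * B a0 b0.
  rewrite -mulmxA mxtrace_mulC -mulmxA mxtrace_delta_mul bidiag_mulmxE.
  by rewrite big1 ?addr0 // => i /eqP eai; apply: hB; rewrite -eai ea0.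
have trDBDY : \tr (D *m B *m D *m Y) = 0.
  rewrite -!mulmxA mxtrace_delta_mul mulmxA mulmx_bidiagE mulmx_deltaE.
  rewrite eq_sym neab mulr0 mul0r add0r big1 // => i /eqP eib.
  rewrite mulmx_deltaE; have [eia | _] := eqP; last by rewrite mulr0.
  by move: eib; rewrite eia ea0 => /eqP; rewrite (gtn_eqF (leqW (ltnSn b0))).
rewrite conjTB mulmxBl !mulmxDl -!scalemxAl raddfB !raddfD /= !mxtraceZ.
rewrite trDBY trBDY trDBDY mulr0 subr0 -mulrN -addrA -mulrDr [dd a0 * _]mulrC.
by rewrite -mulrBr -/c /t divfK // subrr.
Qed.

Lemma bidiag_odd_expr_super m j (a b : 'I_m) : b = a.+1 :> nat ->
  (bidiag_mx (fun c : 'I_m => (odd c)%:R : k) ^+ j.+1) a b = 1.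
Proof.
move=> eb; elim: j => [|j IHj]; rewrite bidiag_expr_super //.
  by rewrite expr0 mxE -val_eqE /= eb (ltn_eqF (ltnSn a)) mul0r add0r.
by rewrite IHj mul1r eb /=; case: (odd a); rewrite ?expr1n ?expr0n ?addr0 ?add0r.
Qed.

Lemma hessenberg_is_commutator m (B : 'M[k]_m.+1) :
  is_hessenberg B -> \tr B = 0 -> is_commutator B.
Proof.
move=> hB trB; pose J := bidiag_mx (fun _ : 'I_m.+1 => 0 : k).
have [trBJ | nzBJ] := eqVneq (\tr (B *m J)) 0.
  apply: (commutator_of_bidiag_orth (dd := fun _ => 0)) => -[|[|j]].
  - by rewrite expr0 mulmx1.
  - by rewrite expr1.
  rewrite mxtrace_hessenberg_mul // => [|a b]; last exact: bidiag_expr_lower.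
  rewrite big1 // => a _; rewrite bidiag_expr_diag expr0n mulr0 add0r.
  rewrite big1 // => b /eqP eba.
  by rewrite bidiag_expr_super ?eba // mulr0 add0r expr0n mulr0.
have [[a0 b0] /= /andP[/eqP ea0 nzB] | no_sub] := pickP (fun p : 'I_m.+1 * 'I_m.+1 =>
    (p.1 == p.2.+1 :> nat) && (B p.1 p.2 != 0)); last first.
  case/eqP: nzBJ; rewrite -[J]expr1 mxtrace_hessenberg_mul // => [|a b]; last first.
    exact: bidiag_expr_lower.
  rewrite big1 // => a _; rewrite bidiag_expr_diag expr0n mulr0 add0r.
  rewrite big1 // => b /eqP eba.
  by have := no_sub (a, b); rewrite /= -eba eqxx /= => /negbFE/eqP->; rewrite mul0r.
pose alt (a : 'I_m.+1) : k := (odd a)%:R.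
have nz : B a0 b0 * (alt b0 - alt a0) != 0.
  rewrite mulf_neq0 // /alt ea0 /=.
  by case: (odd b0); rewrite /= ?subr0 ?sub0r ?oppr_eq0 oner_eq0.
have [T uT [hTB trTBY]] := hessenberg_shift hB ea0 nz.
apply: (is_commutator_conjmx uT).
apply: (commutator_of_bidiag_orth (dd := alt)) => -[|j].
  by rewrite expr0 mulmxE mulr1 mxtrace_conjmx.
rewrite -trTBY -[in RHS](expr1 (bidiag_mx alt)) !mxtrace_hessenberg_mul //;
  try by move=> a b; apply: bidiag_expr_lower.
apply: eq_bigr => a _; rewrite !bidiag_expr_diag; congr (_ * _ + _).
  by rewrite /alt; case: (odd a); rewrite ?expr1n ?expr0n.
by apply: eq_bigr => b /eqP eba; rewrite !bidiag_odd_expr_super.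
Qed.

Theorem mxtrace0_is_commutator m (A : 'M[k]_m) : \tr A = 0 -> is_commutator A.
Proof.
case: m A => [|m] A trA; first by exists 0, 0; apply/matrixP => -[].
have [P uP [hPA _]] := hessenberg_reduction A 0.
apply: (is_commutator_conjmx uP) (hessenberg_is_commutator hPA _).
by rewrite mxtrace_conjmx.
Qed.

End Shoda.

(** * Cohomology of a complex of finite dimensional vector spaces *)

Section QuotientBasis.
Variables (k : fieldType) (m m1 m2 : nat) (K : 'M[k]_(m1, m)) (I : 'M[k]_(m2, m)).

(* Models K / I: the rows of [quot_basis] span a complement of I in K, and [quot_proj]
   sends a vector of K to the coordinates of its class in that basis. *)
Definition quot_basis := row_base (K :\: I)%MS.
Definition quot_proj := lsubmx (pinvmx (col_mx quot_basis (row_base I))).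

Let M := col_mx quot_basis (row_base I).

Let row_free_M : row_free M.
Proof.
rewrite /row_free -addsmxE (adds_eqmx (eq_row_base _) (eq_row_base _)).
by rewrite mxrank_disjoint_sum ?capmx_diff.
Qed.

Let quot_proj_row_mx p (Y1 : 'M_(p, _)) (Y2 : 'M_(p, _)) :
  row_mx Y1 Y2 *m M *m quot_proj = Y1.
Proof. by rewrite /quot_proj mulmx_lsub (mulmxKp row_free_M) row_mxKl. Qed.

Lemma quot_basis_sub : (quot_basis <= K)%MS.
Proof. by rewrite eq_row_base diffmxSl. Qed.

Lemma quot_basisK : quot_basis *m quot_proj = 1%:M.
Proof.
have -> : quot_basis = row_mx 1%:M 0 *m M by rewrite mul_row_col mul1mx mul0mx addr0.
exact: quot_proj_row_mx.
Qed.

Lemma quot_proj_eq0 p (X : 'M[k]_(p, m)) : (X <= I)%MS -> X *m quot_proj = 0.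
Proof.
rewrite -(eq_row_base I) => /submxP[W ->].
have -> : W *m row_base I = row_mx 0 W *m M by rewrite mul_row_col mul0mx add0r.
exact: quot_proj_row_mx.
Qed.

Lemma quot_proj_decomp p (X : 'M[k]_(p, m)) :
  (X <= K)%MS -> (X - X *m quot_proj *m quot_basis <= I)%MS.
Proof.
move=> sXK; have sXM : (X <= M)%MS.
  rewrite (submx_trans sXK) // -addsmxE -{1}(addsmx_diff_cap_eq K I).
  by apply: addsmxS; rewrite eq_row_base ?capmxSr.
rewrite -{1}(mulmxKpV sXM) -[pinvmx M]hsubmxK mul_mx_row mul_row_col.
by rewrite addrAC subrr add0r mulmx_sub ?eq_row_base.
Qed.

End QuotientBasis.

Section ComplexCohomology.
Variables (k : fieldType) (n : int -> nat) (d : forall i : int, 'M[k]_(n i, n (i + 1))).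
Hypothesis hd : is_complex d.
Implicit Types (f g : forall i : int, 'M[k]_(n i)) (i j : int).

(* Generalizes [i - 1] to a fresh [j] and substitutes [i := j + 1], so that the casts
   along [eq_prev n i] become casts along reflexive equations. *)
Local Ltac shift_index i :=
  rewrite /dprev; move: (eq_prev n i) (subrK 1 i); move: (i - 1) => ? ? ?; subst i.

Lemma dprev_mulmx_d i : dprev d i *m d i = 0.
Proof. by shift_index i; rewrite castmx_id hd. Qed.

Lemma dprev_chain f i : is_chain_map d f -> dprev d i *m f i = f (i - 1) *m dprev d i.
Proof. by move=> hf; shift_index i; rewrite !castmx_id hf. Qed.

Lemma d_sub_dprev j : (d j <= dprev d (j + 1))%MS.
Proof.
rewrite /dprev; move: (eq_prev n (j + 1)) (addrK 1 j); move: (j + 1 - 1) => j' E ej.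
by subst j'; rewrite castmx_id.
Qed.

Lemma stablemx_cycles f i : is_chain_map d f -> stablemx (cycles d i) (f i).
Proof. by move=> hf; apply/sub_kermxP; rewrite -mulmxA -hf mulmxA mulmx_ker mul0mx. Qed.

Lemma stablemx_dprev f i : is_chain_map d f -> stablemx (dprev d i) (f i).
Proof. by move=> hf; rewrite dprev_chain // submxMl. Qed.

Definition cohom_proj i := quot_proj (cycles d i) (dprev d i).

Lemma cohom_mapE f i : cohom_map d f i = cohom_basis d i *m f i *m cohom_proj i.
Proof. by rewrite /cohom_map mulmx_lsub. Qed.

Lemma cohom_basisK i : cohom_basis d i *m cohom_proj i = 1%:M.
Proof. exact: quot_basisK. Qed.

Lemma cohom_basis_sub i : (cohom_basis d i <= cycles d i)%MS.
Proof. exact: quot_basis_sub. Qed.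

Lemma cohom_basis_mulmx_d i : cohom_basis d i *m d i = 0.
Proof. exact/sub_kermxP/cohom_basis_sub. Qed.

Lemma cohom_basis_chain_sub f i : is_chain_map d f ->
  (cohom_basis d i *m f i <= cycles d i)%MS.
Proof.
by move=> hf; apply: submx_trans (submxMr _ (cohom_basis_sub i)) (stablemx_cycles i hf).
Qed.

Lemma dprev_cohom_proj p i (X : 'M[k]_(p, n i)) :
  (X <= dprev d i)%MS -> X *m cohom_proj i = 0.
Proof. exact: quot_proj_eq0. Qed.

Lemma cycles_cohom_decomp p i (X : 'M[k]_(p, n i)) : (X <= cycles d i)%MS ->
  (X - X *m cohom_proj i *m cohom_basis d i <= dprev d i)%MS.
Proof. exact: quot_proj_decomp. Qed.

Lemma is_chain_mapB f g :
  is_chain_map d f -> is_chain_map d g -> is_chain_map d (fun i => f i - g i).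
Proof. by move=> hf hg i; rewrite mulmxBr mulmxBl hf hg. Qed.

Lemma is_chain_mapM f g :
  is_chain_map d f -> is_chain_map d g -> is_chain_map d (fun i => f i *m g i).
Proof. by move=> hf hg i; rewrite mulmxA hf -!mulmxA hg. Qed.

Lemma cohom_mapB f g i :
  cohom_map d (fun i => f i - g i) i = cohom_map d f i - cohom_map d g i.
Proof. by rewrite !cohom_mapE mulmxBr mulmxBl. Qed.

Lemma cohom_mapM f g i : is_chain_map d f -> is_chain_map d g ->
  cohom_map d (fun i => f i *m g i) i = cohom_map d f i *m cohom_map d g i.
Proof.
move=> hf hg; rewrite !cohom_mapE; set B := cohom_basis d i; set P := cohom_proj i.
have sBf : (B *m f i <= cycles d i)%MS by apply: cohom_basis_chain_sub.
have boundary_part : (B *m f i - B *m f i *m P *m B) *m g i *m P = 0.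
  apply: dprev_cohom_proj.
  exact: submx_trans (submxMr _ (cycles_cohom_decomp sBf)) (stablemx_dprev i hg).
have -> : B *m (f i *m g i) *m P =
    (B *m f i - B *m f i *m P *m B) *m g i *m P + B *m f i *m P *m B *m g i *m P.
  by rewrite -!mulmxDl subrK mulmxA.
by rewrite boundary_part add0r !mulmxA.
Qed.

Lemma homotopy_term_sub_dprev (h : forall i, 'M[k]_(n (i + 1), n i)) i :
  (castmx (eq_prev n i, eq_prev n i) (h (i - 1) *m d (i - 1)) <= dprev d i)%MS.
Proof. by shift_index i; rewrite !castmx_id submxMl. Qed.

Lemma cohom_map_homotopic f g i :
  chain_homotopic d f g -> cohom_map d f i = cohom_map d g i.
Proof.
case=> h hfg; apply/eqP; rewrite -subr_eq0 -cohom_mapB cohom_mapE hfg.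
rewrite mulmxDr mulmxDl mulmxA cohom_basis_mulmx_d !mul0mx add0r -mulmxA.
by rewrite dprev_cohom_proj ?mulmx0 // homotopy_term_sub_dprev.
Qed.

Definition cohom_lift (Z : forall i, 'M[k]_(\rank (cycles d i :\: dprev d i))) i :=
  cohom_proj i *m Z i *m cohom_basis d i.

Lemma cohom_lift_chain Z : is_chain_map d (cohom_lift Z).
Proof.
move=> i; rewrite /cohom_lift !(mulmxA (d i)) dprev_cohom_proj ?d_sub_dprev // !mul0mx.
by rewrite -mulmxA cohom_basis_mulmx_d mulmx0.
Qed.

Lemma cohom_map_lift Z i : cohom_map d (cohom_lift Z) i = Z i.
Proof.
rewrite cohom_mapE /cohom_lift !(mulmxA (cohom_basis d i)) cohom_basisK mul1mx.
by rewrite -mulmxA cohom_basisK mulmx1.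
Qed.

Lemma cycles_mul_sub_dprev f i : is_chain_map d f -> cohom_map d f i = 0 ->
  (cycles d i *m f i <= dprev d i)%MS.
Proof.
move=> hf f0; set K := cycles d i; set B := cohom_basis d i; set P := cohom_proj i.
have sBf : (B *m f i <= dprev d i)%MS.
  have := cycles_cohom_decomp (cohom_basis_chain_sub i hf).
  by rewrite -/B -/P -cohom_mapE f0 mul0mx subr0.
rewrite -[K](subrK (K *m P *m B)) mulmxDl addmx_sub //.
  exact: submx_trans (submxMr _ (cycles_cohom_decomp (submx_refl K))) (stablemx_dprev i hf).
by rewrite -mulmxA mulmx_sub.
Qed.

Section NullHomotopy.
Variable f : forall i, 'M[k]_(n i).
Hypothesis hf : is_chain_map d f.

(* S is a generalized inverse of d, Q i projects onto the boundaries, and P i maps into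
   the cycles; h is the usual contracting homotopy built from this splitting. *)
Let S j := pinvmx (d j).
Let Q i := pinvmx (dprev d i) *m dprev d i.
Let P i := 1%:M - d i *m S i - Q i.
Let h j : 'M[k]_(n (j + 1), n j) := S j *m f j + P (j + 1) *m f (j + 1) *m S j.

Let dprev_Q p i (X : 'M[k]_(p, n i)) : (X <= dprev d i)%MS -> X *m Q i = X.
Proof. by move=> sXd; rewrite mulmxA mulmxKpV. Qed.

Let d_P j : d j *m P (j + 1) = 0.
Proof.
by rewrite !mulmxBr mulmx1 mulmxA hd mul0mx subr0 dprev_Q ?d_sub_dprev ?subrr.
Qed.

Let P_cycles i : (P i <= cycles d i)%MS.
Proof.
apply/sub_kermxP; rewrite !mulmxBl mul1mx mulmxKpV // subrr sub0r.
by rewrite -mulmxA dprev_mulmx_d mulmx0 oppr0.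
Qed.

Let castmx_homotopy i :
  castmx (eq_prev n i, eq_prev n i) (h (i - 1) *m d (i - 1)) =
    Q i *m f i + P i *m f i *m Q i.
Proof.
by rewrite /Q; shift_index i; rewrite !castmx_id /h mulmxDl -!mulmxA hf !mulmxA.
Qed.

Lemma chain_homotopic0 : (forall i, (cycles d i *m f i <= dprev d i)%MS) ->
  chain_homotopic d f (fun=> 0).
Proof.
move=> fK; exists h => i; rewrite subr0 castmx_homotopy dprev_Q; last first.
  exact: submx_trans (submxMr _ (P_cycles i)) (fK i).
rewrite /h mulmxDr (mulmxA (d i) (S i)) (mulmxA (d i) (P (i + 1) *m f (i + 1))).
rewrite (mulmxA (d i) (P (i + 1))) d_P !mul0mx addr0 addrA -!mulmxDl.
by rewrite /P -[1%:M - _ - _]addrA -opprD subrKC mul1mx.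
Qed.

End NullHomotopy.

Lemma cohom_lift_commutator_homotopic phi X Y : is_chain_map d phi ->
  (forall i, cohom_map d phi i = X i *m Y i - Y i *m X i) ->
  chain_homotopic d phi
    (fun i => cohom_lift X i *m cohom_lift Y i - cohom_lift Y i *m cohom_lift X i).
Proof.
move=> hphi defXY.
pose gamma i := cohom_lift X i *m cohom_lift Y i - cohom_lift Y i *m cohom_lift X i.
have [hX hY] := (cohom_lift_chain X, cohom_lift_chain Y).
have hpsi : is_chain_map d (fun i => phi i - gamma i).
  by apply: is_chain_mapB => //; apply: is_chain_mapB; apply: is_chain_mapM.
have psi0 i : cohom_map d (fun i => phi i - gamma i) i = 0.
  by rewrite !cohom_mapB !cohom_mapM // !cohom_map_lift defXY subrr.
have [h hh] := chain_homotopic0 hpsi (fun i => cycles_mul_sub_dprev hpsi (psi0 i)).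
by exists h => i; rewrite -hh subr0.
Qed.

End ComplexCohomology.

Lemma commutator_choice (R : pzRingType) (T : Type) (r : T -> nat)
    (A : forall t, 'M[R]_(r t)) :
  (forall t, is_commutator (A t)) ->
  exists X Y : forall t, 'M[R]_(r t), forall t, A t = X t *m Y t - Y t *m X t.
Proof.
move=> commA.
have XY t : exists XY : 'M[R]_(r t) * 'M[R]_(r t), A t == XY.1 *m XY.2 - XY.2 *m XY.1.
  by have [X [Y ->]] := commA t; exists (X, Y).
exists (fun t => (xchoose (XY t)).1), (fun t => (xchoose (XY t)).2) => t.
exact/eqP/(xchooseP (XY t)).
Qed.

Theorem theorem3 (k : fieldType) (n : int -> nat)
  (d : forall i : int, 'M[k]_(n i, n (i + 1))) (hd : is_complex d)
  (phi : forall i : int, 'M[k]_(n i)) (hphi : is_chain_map d phi) :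
  (exists alpha beta : forall i : int, 'M[k]_(n i),
      [/\ is_chain_map d alpha, is_chain_map d beta &
          chain_homotopic d phi
            (fun i => beta i *m alpha i - alpha i *m beta i)])
  <-> (forall i : int, \tr (cohom_map d phi i) = 0).
Proof.
split=> [[alpha [beta [ha hb /cohom_map_homotopic hom]]] i | tr0].
  by rewrite hom // cohom_mapB !cohom_mapM // raddfB /= mxtrace_mulC subrr.
have [X [Y defXY]] := commutator_choice (fun i => mxtrace0_is_commutator (tr0 i)).
exists (cohom_lift Y), (cohom_lift X); split; try exact: cohom_lift_chain.
exact: cohom_lift_commutator_homotopic.
Qed.
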